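(* Consider the reduced (limit) problem of the repeated wage theft game with fixed strategies and time-converging worker forecasts, as described in the context, and suppose $C'(0)<Py_H-Py_L$. Then there exists an optimal solution $(a^*,w_H^*,w_L^*,b_H^*,b_L^* )$ of this problem with $a^*\in(0,1)$ and $b_H^*=b_L^*=0$.
   Context: Fix $P>0$, $y_H>y_L\ge0$, a real number $u$ and $\gamma\in(0,1]$. Let $C:[0,1)\to\mathbb{R}$ satisfy $C(0)=0$, increasing, strictly convex, twice differentiable, $C(a)\to\infty$ as $a\to1$; let $\eta:[0,\infty)\to\mathbb{R}$ be strictly convex, increasing, twice differentiable with $\eta(0)=0$. In the repeated wage theft game, in each period $t$ the employer promises wages $w_i^t$ and steals $b_i^t$ ($i\in\{H,L\}$), and the worker, forecasting theft $\hat b_i^t$ from past thefts $b_i^1,\dots,b_i^{t-1}$, chooses effort as if receiving $(w_i^t-\hat b_i^t)^+$. A forecast is time-converging if whenever $b_i^t=b_i$ for all $t\ge t_0$, $\hat b_i^t\to b_i$ as $t\to\infty$. When the employer uses a fixed strategy $(w_H,w_L,b_H,b_L)$ in every period and the worker uses a time-converging forecast, the game reduces to the following problem: choose $a,w_H,w_L,b_H,b_L$ to maximize $a\,(Py_H-w_H+b_H-\gamma\eta(b_H))+(1-a)\,(Py_L-w_L+b_L-\gamma\eta(b_L))$ subject to $a\in\arg\max_{a'\in[0,1)}\{a'(w_H-b_H)+(1-a')(w_L-b_L)-C(a')\}$; $a(w_H-b_H)+(1-a)(w_L-b_L)-C(a)\ge u$; $0\le b_L\le w_L$, $0\le b_H\le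 w_H$; $a\in[0,1)$. *)

From Stdlib Require Import Reals.
From Coquelicot Require Import Coquelicot.
Open Scope R_scope.

Definition right_deriv (f : R -> R) (x l : R) : Prop :=
  filterlim (fun h => (f (x + h) - f x) / h) (at_right 0) (locally l).

(* df is the derivative of f on [0,b) (one-sided at the endpoint 0);
   b = p_infty encodes [0, +oo). *)
Definition deriv_on_Ico0 (b : Rbar) (f df : R -> R) : Prop :=
  right_deriv f 0 (df 0) /\
  (forall x, 0 < x -> Rbar_lt x b -> is_derive f x (df x)).

Definition twice_diff_on_Ico0 (b : Rbar) (f df d2f : R -> R) : Prop :=
  deriv_on_Ico0 b f df /\ deriv_on_Ico0 b df d2f.

Definition in_Ico0 (b : Rbar) (x : R) : Prop := 0 <= x /\ Rbar_lt x b.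

Definition increasing_on_Ico0 (b : Rbar) (f : R -> R) : Prop :=
  forall x y, in_Ico0 b x -> in_Ico0 b y -> x < y -> f x < f y.

Definition strictly_convex_on_Ico0 (b : Rbar) (f : R -> R) : Prop :=
  forall x y t, in_Ico0 b x -> in_Ico0 b y -> x <> y -> 0 < t < 1 ->
    f (t * x + (1 - t) * y) < t * f x + (1 - t) * f y.

Definition worker_payoff (C : R -> R) (wH wL bH bL a' : R) : R :=
  a' * (wH - bH) + (1 - a') * (wL - bL) - C a'.

Definition employer_obj (P yH yL gamma : R) (eta : R -> R)
    (a wH wL bH bL : R) : R :=
  a * (P * yH - wH + bH - gamma * eta bH)
  + (1 - a) * (P * yL - wL + bL - gamma * eta bL).

Definition feasible (C : R -> R) (u a wH wL bH bL : R) : Prop :=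
  (0 <= a < 1) /\
  (forall a', 0 <= a' < 1 ->
     worker_payoff C wH wL bH bL a' <= worker_payoff C wH wL bH bL a) /\
  worker_payoff C wH wL bH bL a >= u /\
  (0 <= bL <= wL) /\ (0 <= bH <= wH).

Definition optimal (P yH yL gamma u : R) (C eta : R -> R)
    (a wH wL bH bL : R) : Prop :=
  feasible C u a wH wL bH bL /\
  forall a' wH' wL' bH' bL', feasible C u a' wH' wL' bH' bL' ->
    employer_obj P yH yL gamma eta a' wH' wL' bH' bL'
    <= employer_obj P yH yL gamma eta a wH wL bH bL.

From Stdlib Require Import Reals Lra.
From Coquelicot Require Import Coquelicot.
Open Scope R_scope.

(* The worker only cares about the net wages w_i - b_i, so theft gains the
   employer nothing while costing gamma * eta(b_i) >= 0.  Implementing an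
   interior effort a forces the net bonus to equal C'(a), so the worker earns
   at least the rent a C'(a) - C(a) and at least u; hence the employer's
   profit is at most
     V(a) = P yL + a P (yH - yL) - C(a) - max(u, a C'(a) - C(a)),
   and V(a) is attained without theft by paying the bonus C'(a) on top of a
   base wage that meets the participation constraint (convexity of C makes
   the first-order condition sufficient).  V is continuous on (0,1), tends to
   -oo at 1 because C does, and V(a) >= V(0) + a (P (yH - yL) - C'(a)) exceeds
   V(0) for small a > 0 because C'(0) < P (yH - yL); so V has an interior
   maximiser. *)

Lemma Rmax_lipschitz u a b : Rabs (Rmax u a - Rmax u b) <= Rabs (a - b).
Proof.
  unfold Rmax; repeat destruct Rle_dec; unfold Rabs; repeat destruct Rcase_abs; lra.
Qed.

Lemma continuity_pt_Rmax u x : continuity_pt (Rmax u) x.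
Proof.
  intros eps Heps. exists eps. split; [exact Heps|].
  intros y [_ Hy]. simpl in *. unfold R_dist in *.
  eapply Rle_lt_trans; [apply Rmax_lipschitz|exact Hy].
Qed.

Lemma right_deriv_right_continuous f x l :
  right_deriv f x l -> filterlim (fun h => f (x + h)) (at_right 0) (locally (f x)).
Proof.
  intros Hq.
  assert (Hid : filterlim (fun h : R => h) (at_right 0) (locally 0)).
  { apply (filterlim_filter_le_1 _ (filter_le_within _)), filterlim_id. }
  assert (Hlim := filterlim_comp_2 _ _ Rplus (filterlim_const (f x))
    (filterlim_comp_2 _ _ Rmult Hid Hq (filterlim_mult 0 l)) (filterlim_plus (f x) (0 * l))).
  change (plus (f x) (mult 0 l)) with (f x + 0 * l) in Hlim.
  rewrite Rmult_0_l, Rplus_0_r in Hlim.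
  revert Hlim. apply filterlim_ext_loc.
  exists (mkposreal 1 Rlt_0_1). intros h _ Hh. simpl. field. lra.
Qed.

Lemma derive_le_of_secant_le (g : R -> R) l K :
  derivable_pt_lim g 0 l -> (forall t, 0 < t < 1 -> g t - g 0 <= t * K) -> l <= K.
Proof.
  intros Hg Hsec. apply Rnot_lt_le; intros HKl.
  destruct (Hg (l - K)) as [d Hd]; [lra|].
  set (t := Rmin (1/2) (d/2)).
  assert (Ht : 0 < t <= 1/2 /\ t < d).
  { pose proof (cond_pos d). unfold t; repeat split.
    - apply Rmin_glb_lt; lra.
    - apply Rmin_l.
    - eapply Rle_lt_trans; [apply Rmin_r|lra]. }
  assert (Hq := Hd t ltac:(lra) ltac:(rewrite Rabs_pos_eq; lra)).
  rewrite Rplus_0_l in Hq. apply Rabs_def2 in Hq.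
  assert (Hsec' := Hsec t ltac:(lra)).
  assert (Hq' : K < (g t - g 0) / t) by lra.
  apply (Rmult_lt_compat_r t) in Hq'; [|lra].
  unfold Rdiv in Hq'. rewrite Rmult_assoc, Rinv_l in Hq' by lra. lra.
Qed.

Lemma convex_tangent_le (f : R -> R) (b : Rbar) A x l :
  strictly_convex_on_Ico0 b f -> in_Ico0 b A -> in_Ico0 b x ->
  is_derive f A l -> f A + l * (x - A) <= f x.
Proof.
  intros Hconv HA Hx Hd.
  destruct (Req_dec x A) as [->|HxA]; [lra|].
  assert (Hseg : is_derive (fun t => f (A + t * (x - A))) 0 ((x - A) * l)).
  { apply (is_derive_comp f (fun t => A + t * (x - A))).
    - rewrite Rmult_0_l, Rplus_0_r. exact Hd.
    - auto_derive; [auto|ring]. }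
  apply is_derive_Reals in Hseg.
  enough ((x - A) * l <= f x - f A) by lra.
  apply (derive_le_of_secant_le _ _ _ Hseg). intros t Ht.
  rewrite Rmult_0_l, Rplus_0_r.
  replace (A + t * (x - A)) with (t * x + (1 - t) * A) by ring.
  assert (Hc := Hconv x A t Hx HA HxA Ht). lra.
Qed.

Lemma increasing_nonneg (f : R -> R) (b : Rbar) x :
  f 0 = 0 -> increasing_on_Ico0 b f -> in_Ico0 b x -> 0 <= f x.
Proof.
  intros Hf0 Hinc [Hx0 Hxb].
  destruct (Req_dec x 0) as [->|Hx]; [lra|].
  rewrite <- Hf0. left. apply Hinc; [| split; assumption | lra].
  split; [lra|]. apply (Rbar_le_lt_trans _ x); [exact Hx0|exact Hxb].
Qed.

Lemma worker_best_response_foc (C dC : R -> R) wH wL bH bL a :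
  0 < a < 1 -> is_derive C a (dC a) ->
  (forall a', 0 <= a' < 1 ->
     worker_payoff C wH wL bH bL a' <= worker_payoff C wH wL bH bL a) ->
  dC a = (wH - bH) - (wL - bL).
Proof.
  intros Ha HCa Hbest.
  assert (Hd : derivable_pt_lim (worker_payoff C wH wL bH bL) a
                 ((wH - bH) - (wL - bL) - dC a)).
  { apply is_derive_Reals. unfold worker_payoff.
    apply (is_derive_minus (fun a' => a' * (wH - bH) + (1 - a') * (wL - bL)) C).
    - auto_derive; [auto|ring].
    - exact HCa. }
  assert (H0 := deriv_maximum _ 0 1 a (exist _ _ Hd) (proj1 Ha) (proj2 Ha)
    (fun x Hx0 Hx1 => Hbest x (conj (Rlt_le _ _ Hx0) Hx1))).
  rewrite (derive_pt_eq_0 _ _ _ _ Hd) in H0. lra.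
Qed.

Definition info_rent (C dC : R -> R) (a : R) : R := a * dC a - C a.

Definition effort_value (P yH yL u : R) (C dC : R -> R) (a : R) : R :=
  P * yL + a * (P * yH - P * yL) - C a - Rmax u (info_rent C dC a).

Lemma info_rent_nonneg (C dC : R -> R) (b : Rbar) a :
  C 0 = 0 -> strictly_convex_on_Ico0 b C -> in_Ico0 b a ->
  is_derive C a (dC a) -> 0 <= info_rent C dC a.
Proof.
  intros HC0 Hconv [Ha0 Hab] HCa.
  assert (H0b : in_Ico0 b 0).
  { split; [lra|]. apply (Rbar_le_lt_trans _ a); [exact Ha0|exact Hab]. }
  assert (Ht := convex_tangent_le C b a 0 (dC a) Hconv (conj Ha0 Hab) H0b HCa).
  unfold info_rent. lra.
Qed.

Lemma employer_obj_le_effort_value P yH yL gamma u (C dC eta : R -> R) a wH wL bH bL :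
  0 <= gamma -> (forall b, 0 <= b -> 0 <= eta b) -> C 0 = 0 ->
  (0 < a < 1 -> is_derive C a (dC a)) ->
  feasible C u a wH wL bH bL ->
  employer_obj P yH yL gamma eta a wH wL bH bL <= effort_value P yH yL u C dC a.
Proof.
  intros Hgamma Heta HC0 HCa [Ha [Hbest [Hpart [HbL HbH]]]].
  assert (Hrent : info_rent C dC a <= worker_payoff C wH wL bH bL a).
  { unfold info_rent, worker_payoff.
    destruct (Req_dec a 0) as [->|Ha0]; [lra|].
    assert (Ha' : 0 < a < 1) by lra.
    rewrite (worker_best_response_foc C dC wH wL bH bL a Ha' (HCa Ha') Hbest). nra. }
  assert (Hmax : Rmax u (info_rent C dC a) <= worker_payoff C wH wL bH bL a)
    by (apply Rmax_lub; lra).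
  assert (0 <= a * (gamma * eta bH) + (1 - a) * (gamma * eta bL)).
  { apply Rplus_le_le_0_compat; apply Rmult_le_pos;
      try apply Rmult_le_pos; try apply Heta; lra. }
  unfold employer_obj, effort_value, worker_payoff in *. nra.
Qed.

Lemma effort_value_attained P yH yL gamma u (C dC eta : R -> R) A :
  C 0 = 0 -> eta 0 = 0 -> increasing_on_Ico0 (Finite 1) C ->
  strictly_convex_on_Ico0 (Finite 1) C -> 0 < A < 1 -> is_derive C A (dC A) ->
  exists wH wL, feasible C u A wH wL 0 0 /\
    employer_obj P yH yL gamma eta A wH wL 0 0 = effort_value P yH yL u C dC A.
Proof.
  intros HC0 Heta0 Hinc Hconv HA HCA.
  assert (HA' : in_Ico0 (Finite 1) A) by (split; simpl; lra).
  assert (Hrent := info_rent_nonneg C dC _ A HC0 Hconv HA' HCA).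
  assert (HCApos := increasing_nonneg C _ A HC0 Hinc HA').
  unfold info_rent in Hrent.
  set (wL := Rmax 0 (u - info_rent C dC A)).
  assert (HwL : 0 <= wL) by apply Rmax_l.
  assert (HwL' : info_rent C dC A + wL = Rmax u (info_rent C dC A)).
  { unfold wL, Rmax. repeat destruct Rle_dec; lra. }
  unfold info_rent in HwL'.
  exists (dC A + wL), wL. split.
  - split; [lra|]. split; [|split; [|split; split; nra]].
    + intros a' Ha'. unfold worker_payoff.
      assert (Ht := convex_tangent_le C _ A a' (dC A) Hconv HA' Ha' HCA). nra.
    + unfold worker_payoff. assert (Hu := Rmax_l u (A * dC A - C A)). lra.
  - unfold employer_obj, effort_value, info_rent. rewrite Heta0, <- HwL'. ring.
Qed.

Lemma continuity_argmax_of_dominated_outside (f : R -> R) (S : R -> Prop) lo hi e :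
  lo <= e <= hi ->
  (forall c, lo <= c <= hi -> continuity_pt f c) ->
  (forall a, S a -> a < lo \/ hi < a -> f a <= f e) ->
  exists A, lo <= A <= hi /\ forall a, S a -> f a <= f A.
Proof.
  intros He Hcont Hout.
  destruct (continuity_ab_maj f lo hi ltac:(lra) Hcont) as [A [HAmax HA]].
  exists A. split; [exact HA|]. intros a Ha.
  destruct (Rlt_or_le a lo) as [Hlo|Hlo]; [|destruct (Rlt_or_le hi a) as [Hhi|Hhi]].
  - eapply Rle_trans; [apply Hout; auto|apply HAmax; lra].
  - eapply Rle_trans; [apply Hout; auto|apply HAmax; lra].
  - apply HAmax; lra.
Qed.

Section EffortValue.

Variables (P yH yL u : R) (C dC d2C : R -> R).
Hypothesis hD : P * yL < P * yH.
Hypothesis hC0 : C 0 = 0.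
Hypothesis hCinc : increasing_on_Ico0 (Finite 1) C.
Hypothesis hCconv : strictly_convex_on_Ico0 (Finite 1) C.
Hypothesis hCdiff : twice_diff_on_Ico0 (Finite 1) C dC d2C.
Hypothesis hClim : filterlim C (at_left 1) (Rbar_locally p_infty).
Hypothesis hC'0 : dC 0 < P * yH - P * yL.

Local Notation value := (effort_value P yH yL u C dC).

Lemma is_derive_C a : 0 < a < 1 -> is_derive C a (dC a).
Proof. intros Ha. apply hCdiff; simpl; lra. Qed.

Lemma is_derive_dC a : 0 < a < 1 -> is_derive dC a (d2C a).
Proof. intros Ha. apply hCdiff; simpl; lra. Qed.

Lemma info_rent_C_nonneg a : 0 <= a < 1 -> 0 <= info_rent C dC a.
Proof.
  intros Ha. destruct (Req_dec a 0) as [->|Ha0].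
  - unfold info_rent. rewrite hC0. lra.
  - apply (info_rent_nonneg C dC (Finite 1) a hC0 hCconv);
      [split; simpl; lra | apply is_derive_C; lra].
Qed.

Lemma effort_value_0 : value 0 = P * yL - Rmax u 0.
Proof.
  unfold effort_value, info_rent. rewrite hC0, !Rmult_0_l.
  f_equal; [ring|f_equal; ring].
Qed.

Lemma effort_value_le_linear a :
  0 <= a < 1 -> value a <= value 0 + a * (P * yH - P * yL).
Proof.
  intros Ha. rewrite effort_value_0. unfold effort_value.
  assert (HCa := increasing_nonneg C (Finite 1) a hC0 hCinc Ha).
  assert (Hrent := info_rent_C_nonneg a Ha).
  assert (Hmax : Rmax u 0 <= Rmax u (info_rent C dC a)).
  { apply Rmax_lub; [apply Rmax_l|eapply Rle_trans; [exact Hrent|apply Rmax_r]]. }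
  lra.
Qed.

Lemma effort_value_ge_linear a :
  0 < a < 1 -> value 0 + a * (P * yH - P * yL - dC a) <= value a.
Proof.
  intros Ha. rewrite effort_value_0. unfold effort_value.
  assert (Hrent := info_rent_C_nonneg a (conj (Rlt_le _ _ (proj1 Ha)) (proj2 Ha))).
  assert (Hlip := Rmax_lipschitz u (info_rent C dC a) 0).
  rewrite Rminus_0_r, (Rabs_pos_eq (info_rent C dC a)) in Hlip by exact Hrent.
  apply Rabs_le_between in Hlip. unfold info_rent in *. lra.
Qed.

Lemma effort_value_continuous c : 0 < c < 1 -> continuity_pt value c.
Proof.
  intros Hc.
  assert (HC : continuity_pt C c).
  { apply continuity_pt_filterlim, (ex_derive_continuous (V := R_NormedModule)).
    exists (dC c). exact (is_derive_C c Hc). }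
  assert (HdC : continuity_pt dC c).
  { apply continuity_pt_filterlim, (ex_derive_continuous (V := R_NormedModule)).
    exists (d2C c). exact (is_derive_dC c Hc). }
  assert (Hid : continuity_pt (fun a => a) c) by apply continuity_pt_id.
  unfold effort_value, info_rent.
  apply continuity_pt_minus; [apply continuity_pt_minus|].
  - apply continuity_pt_plus; [apply continuity_pt_const; intros ? ?; reflexivity|].
    apply continuity_pt_mult; [exact Hid|apply continuity_pt_const; intros ? ?; reflexivity].
  - exact HC.
  - apply (continuity_pt_comp (fun a => a * dC a - C a) (Rmax u)); [|apply continuity_pt_Rmax].
    apply continuity_pt_minus; [apply continuity_pt_mult|]; assumption.
Qed.

Lemma effort_value_exceeds_value_0 : exists e, 0 < e < 1 /\ value 0 < value e.
Proof.
  destruct hCdiff as [_ [HdC0 _]].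
  assert (Hev : at_right 0 (fun h => dC (0 + h) < P * yH - P * yL)).
  { exact (right_deriv_right_continuous dC 0 (d2C 0) HdC0
             (fun y => y < _) (open_lt _ _ hC'0)). }
  assert (Hlt1 : at_right 0 (fun h : R => h < 1)).
  { exact (filter_imp _ _ (fun h H _ => H) (open_lt 1 0 Rlt_0_1)). }
  assert (Hpos : at_right 0 (fun h : R => 0 < h)).
  { exact (@filter_forall R (locally 0) _ (fun h => 0 < h -> 0 < h) (fun h H => H)). }
  destruct (Coquelicot.Hierarchy.filter_ex _
              (filter_and _ _ Hpos (filter_and _ _ Hlt1 Hev))) as [e [He0 [He1 HdCe]]].
  rewrite Rplus_0_l in HdCe.
  exists e. split; [lra|].
  assert (Hv := effort_value_ge_linear e (conj He0 He1)).
  assert (0 < e * (P * yH - P * yL - dC e)) by (apply Rmult_lt_0_compat; lra).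
  lra.
Qed.

Lemma effort_value_below_value_0_near_1 :
  exists b, b < 1 /\ forall a, b < a < 1 -> value a < value 0.
Proof.
  destruct (hClim (fun y => P * yL + (P * yH - P * yL) - u - value 0 < y))
    as [d Hd]; [now exists (P * yL + (P * yH - P * yL) - u - value 0)|].
  exists (1 - d). split; [pose proof (cond_pos d); lra|].
  intros a Ha.
  assert (HCa := Hd a ltac:(change (Rabs (a - 1) < d); rewrite Rabs_left; lra) (proj2 Ha)).
  simpl in HCa. unfold effort_value at 1.
  assert (Hu := Rmax_l u (info_rent C dC a)).
  assert (a * (P * yH - P * yL) < P * yH - P * yL) by nra.
  lra.
Qed.

Lemma effort_value_interior_argmax :
  exists A, 0 < A < 1 /\ forall a, 0 <= a < 1 -> value a <= value A.
Proof.
  destruct effort_value_exceeds_value_0 as [e [He Hve]].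
  destruct effort_value_below_value_0_near_1 as [b [Hb Hvb]].
  assert (Heb : e <= b).
  { apply Rnot_lt_le; intros Hbe. assert (Hvb' := Hvb e ltac:(lra)). lra. }
  set (lo := (value e - value 0) / (P * yH - P * yL)).
  assert (Hlo : lo * (P * yH - P * yL) = value e - value 0) by (unfold lo; field; lra).
  assert (Hle := effort_value_le_linear e ltac:(lra)).
  assert (Hlo0 : 0 < lo) by (apply Rdiv_lt_0_compat; lra).
  assert (Hloe : lo <= e) by nra.
  destruct (continuity_argmax_of_dominated_outside value (fun a => 0 <= a < 1) lo b e)
    as [A [HA Hmax]].
  - lra.
  - intros c Hc. apply effort_value_continuous. lra.
  - intros a Ha [Halo|Hab].
    + assert (Hla := effort_value_le_linear a Ha). nra.
    + assert (Hvb' := Hvb a ltac:(lra)). lra.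
  - exists A. split; [lra|exact Hmax].
Qed.

End EffortValue.

Theorem theorem2
  (P yH yL u gamma : R) (C dC d2C eta deta d2eta : R -> R)
  (hP : 0 < P) (hy : yL < yH) (hyL : 0 <= yL)
  (hgamma : 0 < gamma <= 1)
  (hC0 : C 0 = 0)
  (hCinc : increasing_on_Ico0 (Finite 1) C)
  (hCconv : strictly_convex_on_Ico0 (Finite 1) C)
  (hCdiff : twice_diff_on_Ico0 (Finite 1) C dC d2C)
  (hClim : filterlim C (at_left 1) (Rbar_locally p_infty))
  (heta0 : eta 0 = 0)
  (hetainc : increasing_on_Ico0 p_infty eta)
  (hetaconv : strictly_convex_on_Ico0 p_infty eta)
  (hetadiff : twice_diff_on_Ico0 p_infty eta deta d2eta)
  (hC'0 : dC 0 < P * yH - P * yL) :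
  exists a wH wL bH bL,
    optimal P yH yL gamma u C eta a wH wL bH bL /\
    0 < a < 1 /\ bH = 0 /\ bL = 0.
Proof.
  assert (hD : P * yL < P * yH) by nra.
  assert (heta : forall b, 0 <= b -> 0 <= eta b).
  { intros b Hb. apply (increasing_nonneg eta p_infty); [auto|auto|split; simpl; auto]. }
  destruct (effort_value_interior_argmax P yH yL u C dC d2C
              hD hC0 hCinc hCconv hCdiff hClim hC'0)
    as [A [HA Hmax]].
  destruct (effort_value_attained P yH yL gamma u C dC eta A hC0 heta0 hCinc hCconv HA
              (is_derive_C C dC d2C hCdiff A HA)) as [wH [wL [Hfeas Hobj]]].
  exists A, wH, wL, 0, 0. split; [split|auto].
  - exact Hfeas.
  - intros a wH' wL' bH' bL' Hfeas'.
    rewrite Hobj. eapply Rle_trans.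
    + apply (employer_obj_le_effort_value P yH yL gamma u C dC eta); auto; [lra|].
      exact (is_derive_C C dC d2C hCdiff a).
    + apply Hmax. apply Hfeas'.
Qed.
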